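(* Let $p\ge5$, $n\ge 0$, and let $\mu<\nu$ be two integers in $\{M_{n-1}+1,\dots,M_n\}$ whose metallic codes both end with the digit $0$, such that no integer strictly between $\mu$ and $\nu$ has a metallic code ending with $0$. Then $\nu-\mu=p-3$ if and only if the metallic code of $\nu$ ends with at least two zeros (i.e. is of the form $w\,0^k$ with $k\ge 2$); otherwise $\nu-\mu=p-2$.
   Context: $p\ge5$ is a fixed integer. Metallic numbers: $m_{-1}=0$, $m_0=1$, $m_{n+2}=(p-2)m_{n+1}-m_n$; $M_n=\sum_{k=0}^n m_k$ and $M_{-1}=0$. Write $d=p-3$, $c=p-4$. The metallic code of a positive integer $n$ is the unique word $a_k\cdots a_0$ over the digits $\{0,\dots,p-3\}$ with $a_k\neq 0$, $n=\sum_i a_i m_i$, and containing no factor $d\,c^j\,d$ ($j\ge0$). (The set $\{M_{n-1}+1,\dots,M_n\}$ is the level $n$ of the white metallic tree.) *)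

From mathcomp Require Import all_boot.
Set Implicit Arguments. Unset Strict Implicit. Unset Printing Implicit Defensive.

(* mshift p k = m_{k-1}: mshift p 0 = m_{-1} = 0, mshift p 1 = m_0 = 1,
   mshift p (k+2) = (p-2) * mshift p (k+1) - mshift p k.
   (For p >= 5 the sequence is increasing, so truncated subtraction is exact.) *)
Fixpoint mshift (p k : nat) : nat :=
  match k with
  | 0 => 0
  | 1 => 1
  | (k'.+1 as k1).+1 => (p - 2) * mshift p k1 - mshift p k'
  end.

Definition metal (p i : nat) : nat := mshift p i.+1.

(* Msum p k = M_{k-1} = \sum_{i < k} m_i ; so M_n = Msum p n.+1, M_{-1} = Msum p 0 = 0 *)
Definition Msum (p k : nat) : nat := \sum_(i < k) metal p i.

(* A word a_k ... a_0 is represented by the list s = [:: a_0; a_1; ...; a_k]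
   (least significant digit first). *)
Definition word_value (p : nat) (s : seq nat) : nat :=
  \sum_(i < size s) nth 0 s i * metal p i.

(* the forbidden factor d c^j d (d = p-3, c = p-4); it is a palindrome, so being a
   factor of a_k...a_0 is the same as being a factor of the reversed list s *)
Definition forbidden_factor (p j : nat) : seq nat :=
  (p - 3) :: nseq j (p - 4) ++ [:: p - 3].

Definition is_metallic_code (p : nat) (s : seq nat) (x : nat) : Prop :=
  [/\ all (fun a => a <= p - 3) s,
      s != [::] /\ last 0 s != 0,
      word_value p s = x
    & forall j, ~~ infix (forbidden_factor p j) s].

Definition ends_with_0 (s : seq nat) : Prop := exists t, s = 0 :: t.
Definition ends_with_00 (s : seq nat) : Prop := exists t, s = 0 :: 0 :: t.

From mathcomp Require Import all_boot zify.
Set Implicit Arguments. Unset Strict Implicit. Unset Printing Implicit Defensive.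

(* Read codes most significant digit first and pad them with leading zeros to a
   common length k.  The admissible words of length k (those avoiding d c^j d)
   are the greedy expansions of 0, ..., m_k - 1, and their lexicographic order
   is the numerical order.  If mu has code T0, then mu + i has code Ti for
   i <= a, where a = d if Td is admissible and a = c otherwise; as no code
   strictly between mu and nu ends with 0, the code of nu is the successor of
   Ta, so nu - mu = a + 1.  Writing T = We, the word Wed is admissible iff
   W(e+1) is.  Hence if Td is admissible, W(e+1)0 lies between Td and any word
   Z00 above it, so the code of nu ends with a single 0; if Td is not
   admissible and the code of nu is Zb0 with b > 0, then Z(b-1)0 lies strictly
   between Tc and Zb0, a contradiction. *)

Lemma split_leading_zeros (w : seq nat) : exists k w', w = nseq k 0 ++ w' /\ head 1 w' != 0.
Proof.
elim: w => [|a w [k [w' [-> head_w']]]]; first by exists 0, [::].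
by case: (eqVneq a 0) => [-> | a_neq0]; [exists k.+1, w' | exists 0, (a :: nseq k 0 ++ w')].
Qed.

Section MetallicWords.

Variable p : nat.
Hypothesis p_ge5 : 5 <= p.

Lemma mshift_lt k : mshift p k < mshift p k.+1.
Proof.
elim: k => [|k IHk] //.
have -> : mshift p k.+2 = (p - 2) * mshift p k.+1 - mshift p k by [].
have : 3 * mshift p k.+1 <= (p - 2) * mshift p k.+1 by rewrite leq_mul2r; lia.
lia.
Qed.

Lemma mshiftSS k : mshift p k.+2 + mshift p k = (p - 2) * mshift p k.+1.
Proof.
have -> : mshift p k.+2 = (p - 2) * mshift p k.+1 - mshift p k by [].
by rewrite subnK // (leq_trans (ltnW (mshift_lt k))) // leq_pmull //; lia.
Qed.

Definition admissible_digit (st : bool) (a : nat) : bool :=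
  (a <= p - 3) && ~~ (st && (a == p - 3)).

(* [st] records that the word read so far ends with d c^j, so that one more d
   would complete a forbidden factor. *)
Definition next_state (st : bool) (a : nat) : bool :=
  (a == p - 3) || (a == p - 4) && st.

Fixpoint admissible (st : bool) (w : seq nat) : bool :=
  if w is a :: w' then admissible_digit st a && admissible (next_state st a) w' else true.

(* Words are read most significant digit first, the reverse of the convention
   of [word_value]. *)
Fixpoint mval (w : seq nat) : nat :=
  if w is a :: w' then a * mshift p (size w').+1 + mval w' else 0.

Lemma mval_cons a w : mval (a :: w) = a * mshift p (size w).+1 + mval w.
Proof. by []. Qed.

Lemma admissible_false st w : admissible st w -> admissible false w.
Proof.
elim: w st => [|a w IHw] st //= /andP[/andP[a_le _]].
rewrite /admissible_digit a_le /next_state andbF /=.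
by case: eqP => // _ /IHw.
Qed.

Lemma mval_bound st w :
  admissible st w -> mval w + st * mshift p (size w) < mshift p (size w).+1.
Proof.
elim: w st => [|a w IHw] st; first by case: st.
rewrite mval_cons [size _]/= => /andP[/andP[a_le a_st] /IHw].
have := mshiftSS (size w); have := mshift_lt (size w).
set M0 := mshift p _; set M1 := mshift p _.+1; set M2 := mshift p _.+2.
rewrite /next_state; case: st a_st => /=.
  all: by case: eqP => [->|a_neq_d]; case: eqP => [->|a_neq_c] /=; nia.
Qed.

Lemma exists_admissible_word k (st : bool) x :
  x + st * mshift p k < mshift p k.+1 ->
  exists w, [/\ size w = k, admissible st w & mval w = x].
Proof.
elim: k st x => [|k IHk] st x.
  by move=> x_lt1; exists [::]; split => //; case: st x_lt1 => /=; lia.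
have := mshiftSS k; have := mshift_lt k; have := mshift_lt k.+1.
set M0 := mshift p k; set M1 := mshift p k.+1; set M2 := mshift p k.+2.
move=> M1_lt_M2 M0_lt_M1 rec_M2 x_lt.
case: (ltnP x ((p - 3) * M1)) => [x_lt_d | x_ge_d].
  have a_lt : x %/ M1 < p - 3 by rewrite ltn_divLR //; lia.
  have r_lt : x %% M1 < M1 by rewrite ltn_pmod //; lia.
  have := divn_eq x M1; set a := x %/ M1; set r := x %% M1 => x_eq.
  have /IHk[w [size_w adm_w val_w]] : r + ((a == p - 4) && st) * M0 < M1.
    by case: eqP; case: st x_lt => /=; nia.
  exists (a :: w); split; first by rewrite /= size_w.
    rewrite /= /admissible_digit /next_state (ltn_eqF a_lt) (ltnW a_lt) /=.
    by rewrite andbF.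
  by rewrite mval_cons size_w val_w.
have st_false : st = false by case: st x_lt => /=; nia.
have /IHk[w [size_w adm_w val_w]] : x - (p - 3) * M1 + true * M0 < M1.
  by rewrite st_false in x_lt; nia.
exists (p - 3 :: w); split; first by rewrite /= size_w.
  by rewrite /= /admissible_digit /next_state st_false eqxx leqnn.
by rewrite mval_cons size_w val_w; lia.
Qed.

Fixpoint lex_lt (u v : seq nat) : bool :=
  if u is a :: u' then
    if v is b :: v' then (a < b) || (a == b) && lex_lt u' v' else false
  else false.

Lemma lex_lt_rcons u v a b : size u = size v ->
  lex_lt (rcons u a) (rcons v b) = lex_lt u v || (u == v) && (a < b).
Proof.
elim: u v => [|x u IHu] [|y v] //=; first by rewrite andbF orbF.
by case=> size_uv; rewrite IHu // eqseq_cons; case: (x < y); case: (x == y); case: lex_lt.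
Qed.

Lemma lex_lt_total u v : size u = size v -> u != v -> lex_lt u v || lex_lt v u.
Proof.
elim: u v => [|a u IHu] [|b v] //= [size_uv]; rewrite eqseq_cons negb_and.
by case: ltngtP => //= _; apply: IHu.
Qed.

Lemma lex_lt_mval u v : size u = size v -> admissible false u -> admissible false v ->
  lex_lt u v -> mval u < mval v.
Proof.
elim: u v => [|a u IHu] [|b v] // [size_uv] /andP[_ /admissible_false adm_u].
move=> /andP[_ /admissible_false adm_v]; rewrite !mval_cons -size_uv.
case/orP=> [a_lt_b | /andP[/eqP <- lt_uv]]; last by rewrite ltn_add2l IHu.
have := mval_bound adm_u; rewrite mul0n addn0 => u_lt.
have : a.+1 * mshift p (size u).+1 <= b * mshift p (size u).+1 by rewrite leq_mul2r a_lt_b orbT.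
rewrite mulSn; lia.
Qed.

Lemma mval_ltE u v : size u = size v -> admissible false u -> admissible false v ->
  (mval u < mval v) = lex_lt u v.
Proof.
move=> size_uv adm_u adm_v; apply/idP/idP; last exact: lex_lt_mval.
case: (eqVneq u v) => [-> | /(lex_lt_total size_uv) /orP[] //]; first by rewrite ltnn.
move=> /(lex_lt_mval (esym size_uv) adm_v adm_u) lt_vu lt_uv.
by have := ltn_trans lt_uv lt_vu; rewrite ltnn.
Qed.

Lemma mval_rcons w a : mval (rcons w a) = mval (rcons w 0) + a.
Proof. by elim: w => [|b w IHw] /=; rewrite ?muln1 ?addn0 // !size_rcons IHw addnA. Qed.

Lemma mval_pad k w : mval (nseq k 0 ++ w) = mval w.
Proof. by elim: k. Qed.

Lemma admissible_pad k w : admissible false (nseq k 0 ++ w) = admissible false w.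
Proof.
have d_neq0 : (0 == p - 3) = false by apply/eqP; lia.
by elim: k => //= k <-; rewrite /next_state d_neq0 andbF.
Qed.

Lemma admissible_rcons st w a :
  admissible st (rcons w a) = admissible st w && admissible_digit (foldl next_state st w) a.
Proof. by elim: w st => [|b w IHw] st /=; rewrite ?andbT // IHw andbA. Qed.

Lemma admissible_digit_small st a : a < p - 3 -> admissible_digit st a.
Proof. by move=> a_lt; rewrite /admissible_digit (ltnW a_lt) (ltn_eqF a_lt) andbF. Qed.

Lemma admissible_digit_le st a b : a <= b -> admissible_digit st b -> admissible_digit st a.
Proof.
rewrite /admissible_digit => a_le_b /andP[b_le b_st].
rewrite (leq_trans a_le_b b_le) /=; apply: contra b_st => /andP[-> /eqP a_d].
by apply/eqP; lia.
Qed.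

Lemma admissible_digit_next_d st a : admissible_digit st a ->
  admissible_digit (next_state st a) (p - 3) = admissible_digit st a.+1.
Proof.
move=> /andP[a_le _]; rewrite /admissible_digit /next_state leqnn eqxx andbT /=.
have [-> | a_neq_d] := eqVneq a (p - 3); first by rewrite ltnn.
have [-> | a_neq_c] := eqVneq a (p - 4).
  by rewrite (_ : (p - 4).+1 = p - 3) ?leqnn ?eqxx ?andbT //; lia.
have a_lt : a.+1 < p - 3 by lia.
by rewrite (ltnW a_lt) (ltn_eqF a_lt) andbF.
Qed.

Lemma admissible_rcons_prefix st w a : admissible st (rcons w a) -> admissible st w.
Proof. by rewrite admissible_rcons => /andP[]. Qed.

Lemma admissible_rcons_small st w a : a < p - 3 -> admissible st (rcons w a) = admissible st w.
Proof. by move=> a_lt; rewrite admissible_rcons admissible_digit_small ?andbT. Qed.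

Lemma admissible_rcons_le st w a b : a <= b ->
  admissible st (rcons w b) -> admissible st (rcons w a).
Proof. by rewrite !admissible_rcons => a_le_b /andP[-> /(admissible_digit_le a_le_b)]. Qed.

Lemma admissible_rcons_d st w a : admissible st (rcons w a) ->
  admissible st (rcons (rcons w a) (p - 3)) = admissible st (rcons w a.+1).
Proof.
rewrite !admissible_rcons foldl_rcons => /andP[-> adm_a].
by rewrite adm_a admissible_digit_next_d.
Qed.

Lemma admissible_iff st w :
  admissible st w <->
  [/\ all (fun a => a <= p - 3) w, forall j, ~~ infix (forbidden_factor p j) w
    & st -> forall j, ~~ prefix (nseq j (p - 4) ++ [:: p - 3]) w].
Proof.
have d_neq_c : (p - 3 == p - 4) = false by apply/eqP; lia.
elim: w st => [|b w IHw] st; first by split=> // _; split=> // _ [].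
rewrite /forbidden_factor in IHw *; rewrite /= /admissible_digit /next_state.
have [-> | b_neq_d] := eqVneq b (p - 3).
  rewrite leqnn andbT /=; split.
    case/andP=> st_false /IHw[all_w no_ff no_pre]; split=> // [j | st_true].
      by rewrite negb_or no_ff (negbTE (no_pre isT j)).
    by rewrite st_true in st_false.
  case=> all_w no_ff no_pre.
  have -> /= : st = false by case: st no_pre => // /(_ isT 0); rewrite /= eqxx prefix0s.
  by apply/IHw; split=> // [j | _ j]; have := no_ff j; rewrite negb_or => /andP[].
have [-> | b_neq_c] := eqVneq b (p - 4).
  have c_le_d : p - 4 <= p - 3 by lia.
  rewrite c_le_d andbF /=; split=> [/IHw[all_w no_ff no_pre] | [all_w no_ff no_pre]].
    split=> // st_true [|j] /=; first by rewrite d_neq_c.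
    by rewrite eqxx no_pre.
  by apply/IHw; split=> // st_true j; have := no_pre st_true j.+1; rewrite /= eqxx.
rewrite andbF andbT /=; split.
  case/andP=> -> /IHw[all_w no_ff _]; split=> // _ [|j] /=; rewrite eq_sym.
    by rewrite (negbTE b_neq_d).
  by rewrite (negbTE b_neq_c).
by case=> /andP[-> all_w] no_ff _; apply/IHw; split.
Qed.

Lemma rev_forbidden_factor j : rev (forbidden_factor p j) = forbidden_factor p j.
Proof. by rewrite /forbidden_factor rev_cons rev_cat rev_nseq /= -cats1 -cat_cons. Qed.

Lemma word_value_rev s : word_value p s = mval (rev s).
Proof.
elim/last_ind: s => [|s a IHs]; first by rewrite /word_value big_ord0.
rewrite rev_rcons mval_cons size_rev -IHs /word_value size_rcons big_ord_recr /=.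
rewrite nth_rcons ltnn eqxx addnC; congr (_ + _).
by apply: eq_bigr => i _; rewrite nth_rcons ltn_ord.
Qed.

Lemma code_admissible s x :
  is_metallic_code p s x -> admissible false (rev s) /\ mval (rev s) = x.
Proof.
case=> digits_s _ <- no_ff; rewrite word_value_rev; split=> //.
apply/admissible_iff; split=> // [|j]; first by rewrite all_rev.
by rewrite -rev_forbidden_factor infix_rev.
Qed.

Lemma admissible_code w :
  admissible false w -> head 0 w != 0 -> is_metallic_code p (rev w) (mval w).
Proof.
case/admissible_iff=> digits_w no_ff _ head_w; split.
- by rewrite all_rev.
- by case: w head_w {digits_w no_ff} => // a w; rewrite rev_cons last_rcons -size_eq0 size_rcons.
- by rewrite word_value_rev revK.
- by move=> j; rewrite -rev_forbidden_factor infix_rev.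
Qed.

Lemma code_ends_with_0_word L s x :
  is_metallic_code p s x -> ends_with_0 s -> size s <= L.+2 ->
  exists W a, [/\ size W = L, admissible false (rcons (rcons W a) 0),
                  mval (rcons (rcons W a) 0) = x & ends_with_00 s <-> a = 0].
Proof.
move=> code_s [[|a t] s_eq] size_s; subst s; first by case: code_s => _ [].
have [adm_s val_s] := code_admissible code_s.
exists (nseq (L - size t) 0 ++ rev t), a.
rewrite !rcons_cat -!rev_cons admissible_pad mval_pad; split=> //.
- by rewrite size_cat size_nseq size_rev; rewrite /= in size_s; lia.
- by split=> [[t' [-> _]] | ->] //; exists t.
Qed.

Lemma zero_ending_code Y : admissible false (rcons Y 0) -> 0 < mval (rcons Y 0) ->
  exists2 s, is_metallic_code p s (mval (rcons Y 0)) & ends_with_0 s.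
Proof.
have [k [[|b Y'] [-> head_Y']]] := split_leading_zeros Y.
  by rewrite rcons_cat mval_pad.
rewrite rcons_cat admissible_pad mval_pad => adm_Y val_pos.
exists (rev (rcons (b :: Y') 0)); first exact: admissible_code.
by exists (rev (b :: Y')); rewrite rev_rcons.
Qed.

Lemma no_word_between u v w : size u = size w -> size v = size w ->
  admissible false u -> admissible false v -> admissible false w ->
  mval v = (mval u).+1 -> lex_lt u w -> lex_lt w v -> False.
Proof.
move=> size_u size_v adm_u adm_v adm_w val_v.
move=> /(lex_lt_mval size_u adm_u adm_w) + /(lex_lt_mval (esym size_v) adm_w adm_v).
by rewrite val_v; lia.
Qed.

Lemma next_zero_ending_word T V c : size T = size V ->
  admissible false (rcons T c) -> ~~ admissible false (rcons T c.+1) ->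
  admissible false (rcons V 0) -> mval (rcons T 0) < mval (rcons V 0) ->
  (forall Y, size Y = size T -> admissible false (rcons Y 0) ->
     ~ (mval (rcons T 0) < mval (rcons Y 0) < mval (rcons V 0))) ->
  mval (rcons V 0) = (mval (rcons T c)).+1.
Proof.
move=> size_TV adm_Tc not_adm_Tc1 adm_V0 lt_T0_V0 no_zero_between.
have adm_T0 := admissible_rcons_le (leq0n c) adm_Tc.
have size_rcons_TV a b : size (rcons T a) = size (rcons V b) by rewrite !size_rcons size_TV.
have lt_TV : lex_lt T V.
  by move: lt_T0_V0; rewrite mval_ltE // lex_lt_rcons // ltnn andbF orbF.
apply/eqP; rewrite eqn_leq [_ < _]mval_ltE // lex_lt_rcons // lt_TV andbT leqNgt.
apply/negP => lt_succ_V.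
(* Otherwise the successor of [T c] is a word [Y e] with [T < Y], and [Y 0] is a
   zero-ending word strictly between [T 0] and [V 0]. *)
have := mval_bound adm_V0; rewrite mul0n addn0 size_rcons -size_TV => V_lt.
have /exists_admissible_word[y [size_y adm_y val_y]] :
    (mval (rcons T c)).+1 + false * mshift p (size T).+1 < mshift p (size T).+2 by lia.
case/lastP: y size_y adm_y val_y => [|Y e] // size_y adm_y val_y.
have size_Y : size Y = size T by move: size_y; rewrite size_rcons => -[].
have adm_Y0 := admissible_rcons_le (leq0n e) adm_y.
have lt_TY : lex_lt T Y.
  have : lex_lt (rcons T c) (rcons Y e) by rewrite -mval_ltE ?val_y // !size_rcons size_Y.
  rewrite lex_lt_rcons ?size_Y // => /orP[// | /andP[/eqP TY c_lt_e]].
  by move: not_adm_Tc1; rewrite TY (admissible_rcons_le c_lt_e adm_y).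
apply: (no_zero_between Y size_Y adm_Y0); apply/andP; split.
  by rewrite mval_ltE ?size_rcons ?size_Y // lex_lt_rcons // lt_TY.
by move: lt_succ_V; rewrite -val_y mval_rcons; lia.
Qed.

Lemma succ_after_d_neq0 W a Z b : size W = size Z ->
  admissible false (rcons (rcons W a) (p - 3)) -> admissible false (rcons (rcons Z b) 0) ->
  mval (rcons (rcons Z b) 0) = (mval (rcons (rcons W a) (p - 3))).+1 -> b != 0.
Proof.
move=> size_WZ adm_Wad adm_Zb0 succ; apply/eqP => b0; subst b.
have adm_Wa := admissible_rcons_prefix adm_Wad.
have adm_Wa1 : admissible false (rcons W a.+1) by rewrite -admissible_rcons_d.
have adm_Wa10 : admissible false (rcons (rcons W a.+1) 0) by rewrite admissible_rcons_small //; lia.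
have lt_WZ : lex_lt W Z.
  have : lex_lt (rcons (rcons W a) (p - 3)) (rcons (rcons Z 0) 0).
    by rewrite -mval_ltE ?succ // !size_rcons size_WZ.
  by rewrite !lex_lt_rcons ?size_rcons ?size_WZ // !ltn0 !andbF !orbF.
apply: (no_word_between _ _ adm_Wad adm_Zb0 adm_Wa10 succ); rewrite ?size_rcons ?size_WZ //.
  by rewrite !lex_lt_rcons ?size_rcons // eqxx ltnSn orbT.
by rewrite !lex_lt_rcons ?size_rcons ?size_WZ // lt_WZ.
Qed.

Lemma succ_after_c_eq0 W a Z b : size W = size Z ->
  admissible false (rcons (rcons W a) (p - 4)) -> ~~ admissible false (rcons (rcons W a) (p - 3)) ->
  admissible false (rcons (rcons Z b) 0) ->
  mval (rcons (rcons Z b) 0) = (mval (rcons (rcons W a) (p - 4))).+1 -> b = 0.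
Proof.
move=> size_WZ adm_Wac not_adm_Wad adm_Zb0 succ.
case: b adm_Zb0 succ => // b adm_Zb0 succ; exfalso.
have adm_Wa := admissible_rcons_prefix adm_Wac.
have adm_Zb1 := admissible_rcons_prefix adm_Zb0.
have adm_Zb := admissible_rcons_le (leqnSn b) adm_Zb1.
have adm_Zb0' : admissible false (rcons (rcons Z b) 0) by rewrite admissible_rcons_small //; lia.
have lt_WaZb1 : lex_lt (rcons W a) (rcons Z b.+1).
  have : lex_lt (rcons (rcons W a) (p - 4)) (rcons (rcons Z b.+1) 0).
    by rewrite -mval_ltE ?succ // !size_rcons size_WZ.
  by rewrite !lex_lt_rcons ?size_rcons ?size_WZ // !ltn0 !andbF !orbF.
have lt_WaZb : lex_lt (rcons W a) (rcons Z b).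
  move: lt_WaZb1; rewrite !lex_lt_rcons // => /orP[-> // | /andP[/eqP WZ a_lt]]; subst Z.
  apply/orP; right; rewrite eqxx ltn_neqAle -ltnS a_lt andbT.
  by apply/eqP => a_eq; move: not_adm_Wad; rewrite admissible_rcons_d // a_eq adm_Zb1.
apply: (no_word_between _ _ adm_Wac adm_Zb0 adm_Zb0' succ); rewrite ?size_rcons ?size_WZ //.
  by rewrite lex_lt_rcons ?size_rcons ?size_WZ // lt_WaZb.
by rewrite !lex_lt_rcons ?size_rcons // eqxx ltnSn orbT.
Qed.

End MetallicWords.

Theorem lemma4 (p n mu nu : nat) (smu snu : seq nat) :
  5 <= p ->
  Msum p n < mu -> mu < nu -> nu <= Msum p n.+1 ->
  is_metallic_code p smu mu -> is_metallic_code p snu nu ->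
  ends_with_0 smu -> ends_with_0 snu ->
  (forall x s, mu < x < nu -> is_metallic_code p s x -> ~ ends_with_0 s) ->
  (nu - mu = p - 3 <-> ends_with_00 snu) /\
  (~ ends_with_00 snu -> nu - mu = p - 2).
Proof.
move=> p_ge5 _ mu_lt_nu _ code_mu code_nu end_mu end_nu no_code_between.
have [W [a [size_W adm_mu val_mu _]]] :=
  code_ends_with_0_word p_ge5 (L := size smu + size snu) code_mu end_mu ltac:(lia).
have [Z [b [size_Z adm_nu val_nu ->]]] :=
  code_ends_with_0_word p_ge5 (L := size smu + size snu) code_nu end_nu ltac:(lia).
have size_WZ : size W = size Z by rewrite size_W size_Z.
have size_WaZb : size (rcons W a) = size (rcons Z b) by rewrite !size_rcons size_WZ.
have no_zero_between Y : size Y = size (rcons W a) -> admissible p false (rcons Y 0) ->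
    ~ (mu < mval p (rcons Y 0) < nu).
  move=> _ adm_Y0 /andP[mu_lt nu_gt].
  have [s code_s end_s] := zero_ending_code p_ge5 adm_Y0 (leq_ltn_trans (leq0n mu) mu_lt).
  by apply: no_code_between code_s end_s; rewrite mu_lt nu_gt.
subst mu nu.
have adm_Wa := admissible_rcons_prefix adm_mu.
have [adm_Wad | not_adm_Wad] := boolP (admissible p false (rcons (rcons W a) (p - 3))).
  have not_adm_Wad1 : ~~ admissible p false (rcons (rcons W a) (p - 3).+1).
    by rewrite admissible_rcons /admissible_digit ltnn andbF.
  have succ := next_zero_ending_word p_ge5 size_WaZb adm_Wad not_adm_Wad1 adm_nu mu_lt_nu
    no_zero_between.
  have b_neq0 := succ_after_d_neq0 p_ge5 size_WZ adm_Wad adm_nu succ.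
  rewrite succ mval_rcons; split=> [|_]; last lia.
  by split=> [|b0]; [lia | rewrite b0 in b_neq0].
have adm_Wac : admissible p false (rcons (rcons W a) (p - 4)).
  by rewrite admissible_rcons_small //; lia.
have not_adm_Wac1 : ~~ admissible p false (rcons (rcons W a) (p - 4).+1).
  by rewrite (_ : (p - 4).+1 = p - 3) //; lia.
have succ := next_zero_ending_word p_ge5 size_WaZb adm_Wac not_adm_Wac1 adm_nu mu_lt_nu
  no_zero_between.
have b0 := succ_after_c_eq0 p_ge5 size_WZ adm_Wac not_adm_Wad adm_nu succ.
by rewrite succ mval_rcons; split=> [|[]] //; split=> // _; lia.
Qed.
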